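(* Suppose $n \ge 2k + 1 \ge 5$. Let $Q$ be an independent set of vertices in $K(n,k)$. Suppose $x_1x_2$ is an edge of $K(n,k)$ such that $x_1\in Q$. If $N(\{x_1,x_2\})$ and $Q$ are disjoint, then $|Q| \le \binom{n-1}{k-1}-\binom{n-k-1}{k-1}+1$.
   Context: The Kneser graph $K(n,k)$ has as vertices the $k$-element subsets of $[n]=\{1,\dots,n\}$, two vertices being adjacent iff they are disjoint. For a set $X$ of vertices of a graph, the neighborhood $N(X)$ is the set of vertices not in $X$ that are adjacent to at least one vertex of $X$. *)

From mathcomp Require Import all_boot.
Set Implicit Arguments. Unset Strict Implicit. Unset Printing Implicit Defensive.

(* Kneser graph K(n,k): vertices are the k-subsets of [n] (modelled as
   'I_n = {0,...,n-1}), adjacency = disjointness. *)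
Definition kvert (n k : nat) (A : {set 'I_n}) : bool := #|A| == k.

Definition kadj (n : nat) (A B : {set 'I_n}) : bool := [disjoint A & B].

Definition kindep (n k : nat) (Q : {set {set 'I_n}}) : bool :=
  [forall A in Q, kvert k A] &&
  [forall A in Q, forall B in Q, ~~ kadj A B].

Definition knbhd (n k : nat) (X : {set {set 'I_n}}) : {set {set 'I_n}} :=
  [set B | kvert k B && (B \notin X) && [exists A in X, kadj A B]].

(* If all members of Q share a point v, then every member other than x1 meets
   x2 (otherwise it would lie in N({x1,x2})) and contains v, which is not in
   x2; this leaves at most C(n-1,k-1) - C(n-k-1,k-1) sets besides x1.
   Otherwise Q is a nontrivial intersecting family and the bound is the
   Hilton-Milner theorem, proved by Frankl's shifting method: exchanging a
   point of the members of a family for another preserves its size,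
   uniformity and cross-intersection, so one may assume the family is stable
   under exchanges; splitting it at a point w into the members avoiding w and
   the link of w then reduces the bound to two inequalities for pairs of
   cross-intersecting families, each proved by induction on the ground set. *)

From mathcomp Require Import all_boot zify.
Set Implicit Arguments. Unset Strict Implicit. Unset Printing Implicit Defensive.

Lemma subn_binS N m j : m <= N ->
  'C(N.+1, j.+1) - 'C(m.+1, j.+1) = 'C(N, j.+1) - 'C(m, j.+1) + ('C(N, j) - 'C(m, j)).
Proof.
move=> mN; rewrite !binS.
have := leq_bin2l j.+1 mN; have := leq_bin2l j mN; lia.
Qed.

Lemma bin_gap N d j : j + d < N ->
  'C(N, j.+1) - 'C(N - d, j.+1) + 1 <= 'C(N, j.+1) - 'C(N - d.+1, j.+1).
Proof.
move=> jdN; have -> : N - d = (N - d.+1).+1 by lia.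
have := @leq_bin2l (N - d.+1).+1 N j.+1; rewrite binS.
have : 0 < 'C(N - d.+1, j) by rewrite bin_gt0; lia.
lia.
Qed.

Section Families.

Variable T : finType.
Implicit Types (F A B : {set {set T}}) (G H L S X Y : {set T}) (w z : T).

Definition uniform Y (k : nat) F := forall G, G \in F -> G \subset Y /\ #|G| = k.

Definition crossint (t : nat) A B := forall G H, G \in A -> H \in B -> t <= #|G :&: H|.

Definition nontrivial F := forall v, exists2 G, G \in F & v \notin G.

Lemma uniform_sub Y k F F' : F' \subset F -> uniform Y k F -> uniform Y k F'.
Proof. by move=> /subsetP sF hF G /sF; apply: hF. Qed.

Lemma crossint_sub t A B A' B' :
  A' \subset A -> B' \subset B -> crossint t A B -> crossint t A' B'.
Proof. by move=> /subsetP sA /subsetP sB h G H /sA GA /sB HB; apply: h. Qed.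

Lemma crossint_sym t A B : crossint t A B -> crossint t B A.
Proof. by move=> h G H GB HA; rewrite setIC; apply: h. Qed.

Definition exch w z G := z |: (G :\ w).

Lemma exch11 w z G : z \in exch w z G.
Proof. exact: setU11. Qed.

Lemma exch_notin w z G : z != w -> w \notin exch w z G.
Proof. by move=> zw; rewrite !inE eq_sym (negbTE zw) eqxx. Qed.

Lemma exchI w z G H : exch w z G :&: exch w z H = exch w z (G :&: H).
Proof. by rewrite /exch -setUIr setDIl. Qed.

Lemma exchK w z G : w \in G -> z \notin G -> w |: (exch w z G :\ z) = G.
Proof.
move=> wG zG; apply/setP=> x; rewrite !inE.
case: (eqVneq x w) => [->|xw]; first by rewrite wG.
by case: (eqVneq x z) => [->|xz] //=; rewrite (negbTE zG).
Qed.

Lemma card_exch_ge w z X : z \notin X -> #|X| <= #|exch w z X|.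
Proof.
move=> zX; rewrite cardsU1 !inE (negbTE zX) andbF (cardsD1 w X).
by case: (w \in X).
Qed.

Lemma card_exch w z G : w \in G -> z \notin G -> #|exch w z G| = #|G|.
Proof. by move=> wG zG; rewrite cardsU1 !inE (negbTE zG) andbF (cardsD1 w G) wG. Qed.

Lemma exch_setU1 w z L : w \notin L -> exch w z (w |: L) = z |: L.
Proof. by move=> wL; rewrite /exch setU1K. Qed.

Definition exch_mem w z F G :=
  if [&& w \in G, z \notin G & exch w z G \notin F] then exch w z G else G.

Definition exch_fam w z F := [set exch_mem w z F G | G in F].

Lemma card_exch_fam w z F : #|exch_fam w z F| = #|F|.
Proof.
apply: card_in_imset => G1 G2 G1F G2F; rewrite /exch_mem.
case: ifP => [/and3P[w1 z1 n1]|_]; case: ifP => [/and3P[w2 z2 n2]|_] //.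
- by move=> e; rewrite -(exchK w1 z1) -(exchK w2 z2) e.
- by move=> e; move: n1; rewrite e G2F.
- by move=> e; move: n2; rewrite -e G1F.
Qed.

Lemma uniform_exch_fam Y k w z F : z \in Y -> uniform Y k F -> uniform Y k (exch_fam w z F).
Proof.
move=> zY hF _ /imsetP[G GF ->]; have [GY cG] := hF G GF; rewrite /exch_mem.
case: ifP => [/and3P[wG zG _]|_] //; split; last by rewrite card_exch.
by rewrite subUset sub1set zY (subset_trans (subD1set G w)).
Qed.

Lemma exch_meet t w z A B G H : crossint t A B -> G \in A -> H \in B ->
  z \notin G -> ~~ [&& w \in H, z \notin H & exch w z H \notin B] ->
  t <= #|exch w z G :&: H|.
Proof.
move=> hAB GA HB zG nH; have hGH := hAB G H GA HB.
have [wH|wH] := boolP (w \in H); last first.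
  apply: leq_trans hGH (subset_leq_card _); apply/subsetP=> x; rewrite !inE.
  case/andP=> xG xH; rewrite xG xH !andbT; apply/orP; right.
  by apply: contraNneq wH => <-.
have [zH|zH] := boolP (z \in H).
  have -> : exch w z G :&: H = exch w z (G :&: H).
    apply/setP=> x; rewrite !inE; case: eqP => [->|_] /=; first by rewrite zH.
    by rewrite andbA.
  by apply: leq_trans hGH (card_exch_ge _ _); rewrite inE (negbTE zG).
move: nH; rewrite wH zH negbK => /(hAB G _ GA).
have -> // : G :&: exch w z H = exch w z G :&: H.
apply/setP=> x; rewrite !inE; case: eqP => [->|_] /=.
  by rewrite (negbTE zG) (negbTE zH).
by rewrite andbA [(x \in G) && _]andbC.
Qed.

Lemma crossint_exch_fam t w z A B :
  crossint t A B -> crossint t (exch_fam w z A) (exch_fam w z B).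
Proof.
move=> hAB _ _ /imsetP[G GA ->] /imsetP[H HB ->]; rewrite /exch_mem.
case: ifP => [/and3P[_ zG _]|/negbT nG]; case: ifP => [/and3P[_ zH _]|/negbT nH].
- rewrite exchI; apply: leq_trans (hAB G H GA HB) (card_exch_ge _ _).
  by rewrite inE (negbTE zG).
- exact: exch_meet hAB GA HB zG nH.
- by rewrite setIC; apply: exch_meet (crossint_sym hAB) HB GA zH nG.
- exact: hAB.
Qed.

Lemma exch_fam_filter_sub (p : pred {set T}) w z F :
  (forall G, ~~ p (exch w z G)) ->
  [set H in exch_fam w z F | p H] \subset [set G in F | p G].
Proof.
move=> hp; apply/subsetP=> H; rewrite !inE => /andP[/imsetP[G GF ->]].
rewrite /exch_mem; case: ifP => _ pH; last by rewrite GF pH.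
by move: (hp G); rewrite pH.
Qed.

Lemma exch_fam_filter_lt (p : pred {set T}) w z F G0 :
  (forall G, ~~ p (exch w z G)) ->
  G0 \in F -> w \in G0 -> z \notin G0 -> exch w z G0 \notin F -> p G0 ->
  #|[set H in exch_fam w z F | p H]| < #|[set G in F | p G]|.
Proof.
move=> hp G0F wG0 zG0 nG0 pG0; apply: proper_card.
rewrite properE exch_fam_filter_sub //=; apply/subsetPn; exists G0.
  by rewrite inE G0F pG0.
rewrite inE pG0 andbT; apply/imsetP=> -[G GF]; rewrite /exch_mem.
case: ifP => [_ e|/negbT c e]; first by move: (hp G); rewrite -e pG0.
by move: c; rewrite -e wG0 zG0 nG0.
Qed.

Definition exch_out_closed w Y F :=
  forall G z, G \in F -> w \in G -> z \in Y -> z \notin G -> exch w z G \in F.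

Lemma exch_out_closed_dec w Y F : exch_out_closed w Y F \/
  exists G z, [/\ G \in F, w \in G, z \in Y, z \notin G & exch w z G \notin F].
Proof.
have [/forall_inP h|/forall_inPn[G GF /forall_inPn[z zY]]] :=
  boolP [forall G in F, forall z in Y, (w \in G) && (z \notin G) ==> (exch w z G \in F)].
  left=> G z GF wG zY zG; move/forall_inP: (h G GF) => /(_ z zY).
  by rewrite wG zG => /implyP; apply.
by rewrite negb_imply => /andP[/andP[wG zG] nG]; right; exists G, z.
Qed.

Lemma exists_exch_out_closed (P : {set {set T}} -> {set {set T}} -> Prop) w Y :
  (forall A B z, z \in Y -> z != w -> P A B -> P (exch_fam w z A) (exch_fam w z B)) ->
  forall A B, P A B -> exists A' B', [/\ P A' B', #|A'| = #|A|, #|B'| = #|B|,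
    exch_out_closed w Y A' & exch_out_closed w Y B'].
Proof.
move=> hP A B; pose pot F := #|[set G in F | w \in G]|.
have pot_le F z : z != w -> pot (exch_fam w z F) <= pot F.
  by move=> zw; apply/subset_leq_card/exch_fam_filter_sub => G; rewrite exch_notin.
have pot_lt F G z : G \in F -> w \in G -> z \notin G -> exch w z G \notin F ->
    z != w /\ pot (exch_fam w z F) < pot F.
  move=> GF wG zG nG; have zw : z != w by apply: contraNneq zG => ->.
  split=> //; apply: (exch_fam_filter_lt (p := fun H => w \in H) _ GF wG zG nG wG).
  by move=> G'; rewrite exch_notin.
have [m] := ubnP (pot A + pot B); elim: m A B => // m IH A B hm PAB.
have step z : z \in Y -> z != w ->
    pot (exch_fam w z A) + pot (exch_fam w z B) < pot A + pot B ->
    exists A' B', [/\ P A' B', #|A'| = #|A|, #|B'| = #|B|,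
      exch_out_closed w Y A' & exch_out_closed w Y B'].
  move=> zY zw lt; have [|A' [B' [P' eA eB cA cB]]] :=
    IH (exch_fam w z A) (exch_fam w z B) _ (hP _ _ _ zY zw PAB).
    by apply: leq_trans lt _; rewrite -ltnS.
  by exists A', B'; rewrite eA eB !card_exch_fam.
have [cA|[G [z [GA wG zY zG nG]]]] := exch_out_closed_dec w Y A; last first.
  have [zw lt] := pot_lt A G z GA wG zG nG.
  by apply: (step z) => //; rewrite -addSn leq_add ?pot_le.
have [cB|[G [z [GB wG zY zG nG]]]] := exch_out_closed_dec w Y B; first by exists A, B.
have [zw lt] := pot_lt B G z GB wG zG nG.
by apply: (step z) => //; rewrite -addnS leq_add ?pot_le.
Qed.

Definition avoid w F := [set G in F | w \notin G].

Definition link w F := [set L : {set T} | (w \notin L) && (w |: L \in F)].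

Lemma avoid_sub w F : avoid w F \subset F.
Proof. by apply/subsetP=> G; rewrite inE => /andP[]. Qed.

Lemma card_avoid_link w F : #|F| = #|avoid w F| + #|link w F|.
Proof.
rewrite -(cardsID [set G : {set T} | w \in G] F) addnC; congr (_ + _).
  by apply: eq_card => G; rewrite !inE andbC.
have -> : F :&: [set G : {set T} | w \in G] = [set w |: L | L : {set T} in link w F].
  apply/setP=> G; rewrite !inE; apply/andP/imsetP => [[GF wG]|[L]].
    by exists (G :\ w); rewrite ?setD1K // inE setD1K // GF !inE eqxx.
  by rewrite inE => /andP[_ LF] ->; rewrite LF setU11.
apply: card_in_imset => L1 L2; rewrite !inE => /andP[w1 _] /andP[w2 _] e.
by rewrite -(setU1K w1) -(setU1K w2) e.
Qed.

Lemma card_avoid_link_bound w A B N d j : d <= N ->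
  #|avoid w A| + #|avoid w B| <= 'C(N, j.+1) - 'C(N - d, j.+1) + 1 ->
  #|link w A| + #|link w B| <= 'C(N, j) - 'C(N - d, j) ->
  #|A| + #|B| <= 'C(N.+1, j.+1) - 'C(N.+1 - d, j.+1) + 1.
Proof.
move=> dN hav hli; rewrite (card_avoid_link w A) (card_avoid_link w B).
rewrite subSn // subn_binS ?leq_subr //; lia.
Qed.

Lemma uniform_avoid Y k w F : uniform Y k F -> uniform (Y :\ w) k (avoid w F).
Proof.
move=> hF G; rewrite inE => /andP[GF wG]; have [GY cG] := hF G GF; split=> //.
by rewrite subsetD1 GY.
Qed.

Lemma uniform_link Y k w F : uniform Y k F -> uniform (Y :\ w) k.-1 (link w F).
Proof.
move=> hF L; rewrite inE => /andP[wL LF]; have [LY cL] := hF _ LF.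
by rewrite subsetD1 wL (subset_trans (subsetUr _ _) LY) -cL cardsU1 wL.
Qed.

Lemma crossint_avoid_link t w A B : crossint t A B -> crossint t (avoid w A) (link w B).
Proof.
move=> hAB G L; rewrite !inE => /andP[GA wG] /andP[wL LB].
have -> : G :&: L = G :&: (w |: L).
  by apply/setP=> x; rewrite !inE; case: eqP => // ->; rewrite (negbTE wG).
exact: hAB.
Qed.

Lemma card_uniform Y k F : uniform Y k F -> #|F| <= 'C(#|Y|, k).
Proof.
move=> hF; rewrite -cards_draws; apply/subset_leq_card/subsetP=> G GF.
by have [GY cG] := hF G GF; rewrite inE GY cG eqxx.
Qed.

Lemma card_uniform_meet Y k F X : X \subset Y -> uniform Y k F ->
  (forall S, S \in F -> 0 < #|S :&: X|) -> #|F| <= 'C(#|Y|, k) - 'C(#|Y :\: X|, k).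
Proof.
move=> XY hF hm; set D := [set S : {set T} | S \subset Y & #|S| == k].
set D' := [set S : {set T} | S \subset Y :\: X & #|S| == k].
have sD : D' \subset D.
  by apply/subsetP=> S; rewrite !inE => /andP[SY ->]; rewrite (subset_trans SY) ?subsetDl.
rewrite -!cards_draws -/D -/D'.
have -> : #|D| - #|D'| = #|D :\: D'| by rewrite cardsD (setIidPr sD).
apply/subset_leq_card/subsetP=> S SF; have [SY cS] := hF S SF.
rewrite !inE SY cS eqxx !andbT; apply: contraTN (hm S SF) => SYX.
rewrite -leqNgt leqn0 cards_eq0; apply/eqP/setP=> x; rewrite !inE.
by apply/negP=> /andP[xS xX]; move: (subsetP SYX x xS); rewrite inE xX.
Qed.

Lemma card_link_meet Y k w A B G : w \in Y -> uniform Y k.+1 B ->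
  G \subset Y :\ w -> G \in avoid w A -> crossint 1 A B ->
  #|link w B| <= 'C(#|Y|.-1, k) - 'C(#|Y|.-1 - #|G|, k).
Proof.
move=> wY hB GY GA hAB.
have cY : #|Y :\ w| = #|Y|.-1 by rewrite (cardsD1 w Y) wY.
have cYG : #|(Y :\ w) :\: G| = #|Y|.-1 - #|G| by rewrite cardsD (setIidPr GY) cY.
rewrite -cYG -cY; apply: (card_uniform_meet (k := k) GY) => [|S SB].
  exact: uniform_link hB.
by rewrite setIC; apply: crossint_avoid_link hAB _ _ GA SB.
Qed.

Lemma card_crossint_compl Y a b A B : uniform Y a A -> uniform Y b B ->
  a + b = #|Y| -> crossint 1 A B -> #|A| + #|B| <= 'C(#|Y|, b).
Proof.
move=> hA hB ab hAB; set C := [set Y :\: G | G in A].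
have setDDY G : G \subset Y -> Y :\: (Y :\: G) = G.
  by move=> GY; rewrite setDDr setDv set0U (setIidPr GY).
have -> : #|A| = #|C|.
  apply/esym/card_in_imset => G1 G2 /hA[s1 _] /hA[s2 _] e.
  by rewrite -(setDDY _ s1) -(setDDY _ s2) e.
have dCB : [disjoint C & B].
  rewrite -setI_eq0; apply/eqP/setP=> S; rewrite !inE.
  apply/negP=> /andP[/imsetP[G GA ->] SB].
  by have := hAB G _ GA SB; rewrite setIDA setIC -setIDA setDv setI0 cards0.
have -> : #|C| + #|B| = #|C :|: B|.
  by rewrite cardsU (disjoint_setI0 dCB) cards0 subn0.
rewrite -cards_draws.
apply/subset_leq_card/subsetP=> S; rewrite !inE => /orP[/imsetP[G GA ->]|SB].
  have [GY cG] := hA G GA.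
  by rewrite subsetDl cardsD (setIidPr GY) cG -ab addKn eqxx.
by have [SY ->] := hB S SB; rewrite SY eqxx.
Qed.

Lemma exists_notin2 Y G H : G \subset Y -> H \subset Y ->
  #|G| + #|H| < #|Y| + #|G :&: H| -> exists2 z, z \in Y & (z \notin G) && (z \notin H).
Proof.
move=> GY HY hc; apply/exists_inP; apply: contraTT hc => /exists_inPn hn.
rewrite -leqNgt -(cardsUI G H) leq_add2r subset_leq_card //.
by apply/subsetP=> z /hn; rewrite inE negb_and !negbK.
Qed.

Lemma crossint_link t w Y k1 k2 A B : uniform Y k1 A -> uniform Y k2 B ->
  exch_out_closed w Y A -> crossint t A B -> k1 + k2 < #|Y| + t ->
  crossint t (link w A) (link w B).
Proof.
move=> hA hB cA hAB hk L S; rewrite !inE => /andP[wL LA] /andP[wS SB].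
have [[LY cL] [SY cS]] := (hA _ LA, hB _ SB).
have [z zY /andP[zL zS]] : exists2 z, z \in Y & (z \notin w |: L) && (z \notin w |: S).
  by apply: exists_notin2 => //; rewrite cL cS (leq_trans hk) ?leq_add2l ?hAB.
have zw : z != w by apply: contraNneq zL => ->; rewrite setU11.
have := hAB _ _ (cA _ z LA (setU11 _ _) zY zL) SB.
have -> // : exch w z (w |: L) :&: (w |: S) = L :&: S.
have zS' : z \notin S by apply: contra zS; apply: setU1r.
rewrite exch_setU1 //; apply/setP=> x; rewrite !inE.
case: (eqVneq x z) => [->|_]; first by rewrite (negbTE zw) (negbTE zS') andbF.
by case: (eqVneq x w) => [->|_] //=; rewrite (negbTE wL).
Qed.

Lemma avoid_neq0 w Y k A : uniform Y k A -> exch_out_closed w Y A -> k < #|Y| ->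
  A != set0 -> avoid w A != set0.
Proof.
move=> hA cA hk /set0Pn[G GA]; apply/set0Pn; have [GY cG] := hA G GA.
have [wG|wG] := boolP (w \in G); last by exists G; rewrite inE GA.
have /subsetPn[z zY zG] : ~~ (Y \subset G).
  by apply: contraTN hk => /subset_leq_card; rewrite cG -leqNgt.
have zw : z != w by apply: contraNneq zG => ->.
by exists (exch w z G); rewrite inE cA // exch_notin.
Qed.

(* Satisfied by the members avoiding i and the link of i in an intersecting
   family closed under exchanges into i. *)
Lemma hilton_milner_2int N k Y A B : #|Y| = N -> 2 * k.+2 <= N.+1 ->
  uniform Y k.+2 A -> uniform Y k.+1 B -> crossint 2 A A -> crossint 1 A B ->
  A != set0 -> #|A| + #|B| <= 'C(N, k.+1) - 'C(N - k.+2, k.+1) + 1.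
Proof.
elim: N k Y A B => [|N IH] k Y A B cY hk hA hB h2 h1 nA; first by lia.
have [hN|hN] := ltnP N.+1 (2 * k.+2).
  have -> : N.+1 - k.+2 = k.+1 by lia.
  rewrite binn subnK ?bin_gt0; last by lia.
  by rewrite -cY; apply: card_crossint_compl hA hB _ h1; lia.
have /set0Pn[w wY] : Y != set0 by rewrite -card_gt0 cY.
pose P A B := [/\ uniform Y k.+2 A, uniform Y k.+1 B, crossint 2 A A,
  crossint 1 A B & A != set0].
have [A' [B' [[hA' hB' h2' h1' nA'] <- <- cA _]]] : exists A' B', [/\ P A' B',
    #|A'| = #|A|, #|B'| = #|B|, exch_out_closed w Y A' & exch_out_closed w Y B'].
  apply: exists_exch_out_closed => [A0 B0 z zY _ [hA0 hB0 h20 h10 nA0]|]; last by split.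
  split; [exact: uniform_exch_fam zY hA0 | exact: uniform_exch_fam zY hB0 |
    exact: crossint_exch_fam h20 | exact: crossint_exch_fam h10 |].
  by rewrite -card_gt0 card_exch_fam card_gt0.
have cYw : #|Y :\ w| = N by move: cY; rewrite (cardsD1 w Y) wY add1n => -[].
have nA0 : avoid w A' != set0 by apply: avoid_neq0 hA' cA _ nA'; lia.
have l2 : crossint 2 (link w A') (link w A') by apply: (crossint_link hA' hA' cA h2'); lia.
have l1 : crossint 1 (link w A') (link w B') by apply: (crossint_link hA' hB' cA h1'); lia.
have bound_link : #|link w A'| + #|link w B'| <= 'C(N, k) - 'C(N - k.+2, k).
  have [->|nL] := eqVneq (link w A') set0.
    have /set0Pn[G0 G0A] := nA0; have [G0Y cG0] := uniform_avoid (w := w) hA' G0A.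
    by rewrite cards0 add0n; have := card_link_meet wY hB' G0Y G0A h1'; rewrite cY cG0.
  case: k {hk hA hB P} hN hA' hB' => [|k] hN hA' hB'.
    have /set0Pn[L LA] := nL; have [_ cL] := uniform_link (w := w) hA' LA.
    by have := l2 L L LA LA; rewrite setIid cL.
  have hk2 : 2 * k.+2 <= N.+1 by lia.
  apply: leq_trans (IH k _ _ _ cYw hk2 (uniform_link hA') (uniform_link hB') l2 l1 nL) _.
  by apply: bin_gap; lia.
apply: (card_avoid_link_bound _ _ bound_link); first by lia.
apply: IH cYw hN (uniform_avoid hA') (uniform_avoid hB') _ _ nA0;
  exact: crossint_sub (avoid_sub _ _) (avoid_sub _ _) _.
Qed.

Lemma hilton_milner_crossint N r Y A B : #|Y| = N -> 2 * r.+1 <= N ->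
  uniform Y r.+1 A -> uniform Y r.+1 B -> crossint 1 A B -> A != set0 -> B != set0 ->
  #|A| + #|B| <= 'C(N, r.+1) - 'C(N - r.+1, r.+1) + 1.
Proof.
elim: N r Y A B => [|N IH] r Y A B cY hr hA hB h1 nA nB; first by lia.
have [hN|hN] := ltnP N (2 * r.+1).
  have -> : N.+1 - r.+1 = r.+1 by lia.
  rewrite binn subnK ?bin_gt0; last by lia.
  by rewrite -cY; apply: card_crossint_compl hA hB _ h1; lia.
have /set0Pn[w wY] : Y != set0 by rewrite -card_gt0 cY.
pose P A B := [/\ uniform Y r.+1 A, uniform Y r.+1 B, crossint 1 A B,
  A != set0 & B != set0].
have [A' [B' [[hA' hB' h1' nA' nB'] <- <- cA cB]]] : exists A' B', [/\ P A' B',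
    #|A'| = #|A|, #|B'| = #|B|, exch_out_closed w Y A' & exch_out_closed w Y B'].
  apply: exists_exch_out_closed => [A0 B0 z zY _ [hA0 hB0 h10 nA0 nB0]|]; last by split.
  split; [exact: uniform_exch_fam zY hA0 | exact: uniform_exch_fam zY hB0 |
    exact: crossint_exch_fam h10 | |]; by rewrite -card_gt0 card_exch_fam card_gt0.
have cYw : #|Y :\ w| = N by move: cY; rewrite (cardsD1 w Y) wY add1n => -[].
have nA0 : avoid w A' != set0 by apply: avoid_neq0 hA' cA _ nA'; lia.
have nB0 : avoid w B' != set0 by apply: avoid_neq0 hB' cB _ nB'; lia.
have l1 : crossint 1 (link w A') (link w B') by apply: (crossint_link hA' hB' cA h1'); lia.
have bound_link : #|link w A'| + #|link w B'| <= 'C(N, r) - 'C(N - r.+1, r).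
  have [->|nLA] := eqVneq (link w A') set0.
    have /set0Pn[G0 G0A] := nA0; have [G0Y cG0] := uniform_avoid (w := w) hA' G0A.
    by rewrite cards0 add0n; have := card_link_meet wY hB' G0Y G0A h1'; rewrite cY cG0.
  have [->|nLB] := eqVneq (link w B') set0.
    have /set0Pn[H0 H0B] := nB0; have [H0Y cH0] := uniform_avoid (w := w) hB' H0B.
    have := card_link_meet wY hA' H0Y H0B (crossint_sym h1').
    by rewrite cards0 addn0 cY cH0.
  case: r {hr hA hB P} hN hA' hB' => [|r] hN hA' hB'.
    have /set0Pn[L LA] := nLA; have /set0Pn[S SB] := nLB.
    have [_ cL] := uniform_link (w := w) hA' LA.
    by have := leq_trans (l1 L S LA SB) (subset_leq_card (subsetIl L S)); rewrite cL.
  have hr2 : 2 * r.+1 <= N by lia.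
  apply: leq_trans (IH r _ _ _ cYw hr2 (uniform_link hA') (uniform_link hB') l1 nLA nLB) _.
  by apply: bin_gap; lia.
apply: (card_avoid_link_bound _ _ bound_link); first by lia.
apply: IH cYw hN (uniform_avoid hA') (uniform_avoid hB') _ nA0 nB0.
exact: crossint_sub (avoid_sub _ _) (avoid_sub _ _) h1'.
Qed.

Definition exch_in_closed i F :=
  forall G j, G \in F -> j \in G -> i \notin G -> exch j i G \in F.

Lemma exch_in_closed_dec i F : exch_in_closed i F \/
  exists G j, [/\ G \in F, j \in G, i \notin G & exch j i G \notin F].
Proof.
have [/forall_inP h|/forall_inPn[G GF /forallPn[j]]] :=
  boolP [forall G in F, forall j, (j \in G) && (i \notin G) ==> (exch j i G \in F)].
  left=> G j GF jG iG; move/forallP: (h G GF) => /(_ j).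
  by rewrite jG iG => /implyP; apply.
by rewrite negb_imply => /andP[/andP[jG iG] nG]; right; exists G, j.
Qed.

Lemma crossint2_avoid i F :
  crossint 1 F F -> exch_in_closed i F -> crossint 2 (avoid i F) (avoid i F).
Proof.
move=> hc cF G G'; rewrite !inE => /andP[GF iG] /andP[G'F iG'].
rewrite ltnNge; apply/negP=> le1.
have /cards1P[j ej] : #|G :&: G'| == 1 by rewrite eqn_leq le1 hc.
have /setIP[jG jG'] : j \in G :&: G' by rewrite ej set11.
have := hc _ _ (cF G j GF jG iG) G'F.
suff -> : exch j i G :&: G' = set0 by rewrite cards0.
apply/setP=> x; rewrite !inE; case: eqP => [->|_] /=; first by rewrite (negbTE iG').
case: (eqVneq x j) => [->|xj] //=; apply/negP=> /andP[xG xG'].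
have : x \in G :&: G' by rewrite inE xG xG'.
by rewrite ej inE (negbTE xj).
Qed.

Lemma hilton_milner_exch_in_closed i k F : 2 * k.+2 < #|T| ->
  uniform [set: T] k.+2 F -> crossint 1 F F -> avoid i F != set0 -> exch_in_closed i F ->
  #|F| <= 'C(#|T|.-1, k.+1) - 'C(#|T|.-1 - k.+2, k.+1) + 1.
Proof.
move=> hn hF hc nA cF; rewrite (card_avoid_link i F).
have cY : #|[set: T] :\ i| = #|T|.-1.
  by have := cardsD1 i [set: T]; rewrite in_setT cardsT => ->.
apply: (hilton_milner_2int cY) nA; first by lia.
- exact: uniform_avoid hF.
- exact: uniform_link hF.
- exact: crossint2_avoid.
- exact: crossint_avoid_link.
Qed.

Lemma hilton_milner_cover2 i j k F : i != j -> 2 * k.+2 < #|T| ->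
  uniform [set: T] k.+2 F -> crossint 1 F F -> nontrivial F ->
  (forall G, G \in F -> (i \in G) || (j \in G)) ->
  #|F| <= 'C(#|T|.-1, k.+1) - 'C(#|T|.-1 - k.+2, k.+1) + 1.
Proof.
move=> ij hn hF hc hnt cover.
have [m cT] : exists m, #|T| = m.+2 by exists #|T|.-2; lia.
set Y := [set: T] :\ i :\ j.
have cY : #|Y| = m.
  have := cardsD1 j ([set: T] :\ i); have := cardsD1 i [set: T].
  rewrite /Y !inE eq_sym ij cardsT cT /=; lia.
rewrite (card_avoid_link i F) (card_avoid_link j (avoid i F)).
rewrite (card_avoid_link j (link i F)).
have -> : avoid j (avoid i F) = set0.
  apply/setP=> G; rewrite !inE; apply/negP=> /andP[/andP[GF iG] jG].
  by move: (cover G GF); rewrite (negbTE iG) (negbTE jG).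
rewrite cards0 add0n.
have hA : uniform Y k.+1 (avoid j (link i F)) := uniform_avoid (uniform_link hF).
have hB : uniform Y k.+1 (link j (avoid i F)) := uniform_link (uniform_avoid hF).
have hC : uniform Y k (link j (link i F)) := uniform_link (uniform_link hF).
have hAB : crossint 1 (avoid j (link i F)) (link j (avoid i F)).
  exact: crossint_avoid_link (crossint_sym (crossint_avoid_link hc)).
have nA : avoid j (link i F) != set0.
  have [G GF jG] := hnt j.
  have iG : i \in G by move: (cover G GF); rewrite (negbTE jG) orbF.
  by apply/set0Pn; exists (G :\ i); rewrite !inE eqxx /= setD1K // GF (negbTE jG) andbF.
have nB : link j (avoid i F) != set0.
  have [G GF iG] := hnt i; have jG : j \in G by move: (cover G GF); rewrite (negbTE iG).
  apply/set0Pn; exists (G :\ j); rewrite !inE eqxx /= setD1K // GF.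
  by rewrite (negbTE ij) (negbTE iG) andbF.
have hk : 2 * k.+1 <= m by lia.
have := hilton_milner_crossint cY hk hA hB hAB nA nB.
have := card_uniform hC; rewrite cY cT /= subSS binS.
have := @leq_bin2l (m - k.+1) m k.+1 (leq_subr _ _).
move: #|avoid j _| #|link j _| #|link j _| => a b c; clear; lia.
Qed.

Lemma nontrivial_or_star F : nontrivial F \/ exists v, forall G, G \in F -> v \in G.
Proof.
have [/forallP h|/forallPn[v /exists_inPn h]] :=
  boolP [forall v, [exists G in F, v \notin G]].
  by left=> v; have /exists_inP := h v.
by right; exists v => G /h; rewrite negbK.
Qed.

Lemma card_star_meet v k Q X : uniform [set: T] k.+1 Q -> (forall G, G \in Q -> v \in G) ->
  v \notin X -> (forall G, G \in Q -> 0 < #|G :&: X|) ->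
  #|Q| <= 'C(#|T|.-1, k) - 'C(#|T|.-1 - #|X|, k).
Proof.
move=> hQ vQ vX meetX; rewrite (card_avoid_link v Q).
have -> : avoid v Q = set0.
  by apply/setP=> G; rewrite !inE; apply/negP=> /andP[/vQ ->].
rewrite cards0 add0n -cardsT; apply: (card_link_meet (A := [set X])) hQ _ _ _.
- by rewrite in_setT.
- by rewrite subsetD1 subsetT.
- by rewrite !inE eqxx.
- by move=> _ G /set1P ->; rewrite setIC; apply: meetX.
Qed.

Theorem hilton_milner k F : 2 * k.+2 < #|T| ->
  uniform [set: T] k.+2 F -> crossint 1 F F -> nontrivial F ->
  #|F| <= 'C(#|T|.-1, k.+1) - 'C(#|T|.-1 - k.+2, k.+1) + 1.
Proof.
move=> hn; have /card_gt0P[i _] : 0 < #|T| by lia.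
have [m] := ubnP #|avoid i F|; elim: m F => // m IH F hm hF hc hnt.
have [cF|[G0 [j [G0F jG0 iG0 nG0]]]] := exch_in_closed_dec i F.
  apply: hilton_milner_exch_in_closed cF => //.
  by have [G GF iG] := hnt i; apply/set0Pn; exists G; rewrite inE GF.
have ij : i != j by apply: contraNneq iG0 => ->.
set F' := exch_fam j i F.
have [eA|nA'] := eqVneq (avoid i F') set0.
  apply: (hilton_milner_cover2 ij) => // G GF; apply/orP.
  have [iG|iG] := boolP (i \in G); [by left | right; apply: contraT => jG].
  have : G \in avoid i F'.
    by rewrite inE iG andbT; apply/imsetP; exists G; rewrite // /exch_mem (negbTE jG).
  by rewrite eA inE.
have ntF' : nontrivial F'.
  move=> v; have [->|vi] := eqVneq v i.
    by have /set0Pn[G'] := nA'; rewrite inE => /andP[G'F iG']; exists G'.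
  have [G GF vG] := hnt v; exists (exch_mem j i F G); first exact: imset_f.
  by rewrite /exch_mem; case: ifP => // _; rewrite !inE (negbTE vi) (negbTE vG) andbF.
rewrite -(card_exch_fam j i F); apply: IH => //.
- rewrite -ltnS; apply: leq_trans _ hm; rewrite ltnS.
  apply: (exch_fam_filter_lt (p := fun G => i \notin G) _ G0F) => //.
  by move=> G; rewrite negbK exch11.
- exact: uniform_exch_fam.
- exact: crossint_exch_fam.
Qed.

End Families.

Lemma kindep_uniform_crossint n k (Q : {set {set 'I_n}}) :
  kindep k Q -> uniform [set: 'I_n] k Q /\ crossint 1 Q Q.
Proof.
case/andP=> /forall_inP hv /forall_inP hi; split=> [G GQ|G H GQ HQ].
  by split; [apply: subsetT | apply/eqP/hv].
by move/forall_inP: (hi G GQ) => /(_ H HQ); rewrite /kadj -setI_eq0 card_gt0.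
Qed.

Lemma kindep_meet_outside_nbhd n k (Q : {set {set 'I_n}}) x1 x2 G :
  kindep k Q -> kadj x1 x2 -> x1 \in Q -> [disjoint knbhd k [set x1; x2] & Q] ->
  G \in Q -> G != x1 -> 0 < #|G :&: x2|.
Proof.
case/andP=> /forall_inP hv /forall_inP hi a12 x1Q hdis GQ Gx1.
rewrite card_gt0 setI_eq0; apply/negP=> dGx2.
have : G \in knbhd k [set x1; x2].
  rewrite inE hv //= !inE negb_or Gx1 /=; apply/andP; split.
    by apply: contraNneq (forall_inP (hi _ x1Q) _ GQ) => ->.
  by apply/existsP; exists x2; rewrite !inE eqxx orbT /kadj disjoint_sym.
by move/(disjointFr hdis); rewrite GQ.
Qed.

Theorem lemma2p10 (n k : nat) (Q : {set {set 'I_n}}) (x1 x2 : {set 'I_n}) :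
  5 <= 2 * k + 1 -> 2 * k + 1 <= n ->
  kindep k Q ->
  kvert k x1 -> kvert k x2 -> kadj x1 x2 ->
  x1 \in Q ->
  [disjoint knbhd k [set x1; x2] & Q] ->
  #|Q| <= 'C(n - 1, k - 1) - 'C(n - k - 1, k - 1) + 1.
Proof.
case: k => [|[|k]] // _ hn hQ _ /eqP cx2 a12 x1Q hdis.
have [hF hc] := kindep_uniform_crossint hQ.
suff : #|Q| <= 'C(#|'I_n|.-1, k.+1) - 'C(#|'I_n|.-1 - k.+2, k.+1) + 1.
  by rewrite card_ord !subn1 /= -predn_sub.
have [nt|[v vQ]] := nontrivial_or_star Q.
  by apply: hilton_milner hF hc nt; rewrite card_ord; lia.
have vx2 : v \notin x2 by rewrite (disjointFr a12 (vQ _ x1Q)).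
rewrite (cardsD1 x1 Q) x1Q add1n addn1 ltnS -cx2.
apply: card_star_meet vx2 _ => [|G|G].
- exact: uniform_sub (subsetDl _ _) hF.
- by move/setD1P=> [_ /vQ].
- by move/setD1P=> [Gx1 GQ]; apply: kindep_meet_outside_nbhd hQ a12 x1Q hdis GQ Gx1.
Qed.
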